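(* Let $p$ be a prime and let $E$ be an elementary abelian $p$-group of rank at least $2$. Then for every $z\in E$, $$\sum_{\substack{Z\le E\\ z\in Z}}\frac{\mu(\mathbf{1},Z)}{|Z|}=0,$$ where the sum runs over subgroups $Z$ of $E$ containing $z$.
   Context: $\mu$ denotes the Möbius function of the poset of subgroups of $E$ ordered by inclusion, and $\mathbf{1}$ is the trivial subgroup. *)

From mathcomp Require Import all_boot all_order all_algebra all_fingroup all_solvable.
Set Implicit Arguments. Unset Strict Implicit. Unset Printing Implicit Defensive.
Import GRing.Theory.

(* The recursion is on a fuel argument; fuel #|K|.+1 always suffices since
   L \proper K implies #|L| < #|K|.  The value of mu on an interval [H,K]
   depends only on the subgroups between H and K, so it agrees with the
   Möbius function of the subgroup poset of any group E containing K. *)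
Fixpoint subgroup_mobius_rec (gT : finGroupType) (n : nat) (H K : {set gT}) : int :=
  match n with
  | 0 => 0%R
  | n'.+1 =>
      if H == K then 1%R
      else if H \subset K then
        (- (\sum_(L : {group gT} | (H \subset L) && (L \proper K))
              subgroup_mobius_rec n' H L))%R
      else 0%R
  end.

Definition subgroup_mobius (gT : finGroupType) (H K : {set gT}) : int :=
  subgroup_mobius_rec #|K|.+1 H K.

(* Over the abelian group E, the function Z |-> [z \in Z] / |Z| is the average, over the
   linear characters chi of E that are trivial on Z, of chi z.  Exchanging the two sums
   turns the left-hand side into |E|^-1 * sum_chi chi z * sum_(Z <= ker chi) mu(1, Z),
   and each inner sum vanishes unless ker chi = 1.  But an abelian group with a faithful
   irreducible character is cyclic, and an elementary abelian group of rank >= 2 is not. *)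

From mathcomp Require Import all_boot all_order all_algebra all_fingroup all_solvable.
From mathcomp Require Import all_field all_character.
From mathcomp Require Import ring.
Set Implicit Arguments.
Unset Strict Implicit.
Unset Printing Implicit Defensive.

Import GRing.Theory Num.Theory.

Local Open Scope ring_scope.

Section SubgroupMobius.
Variable gT : finGroupType.

Lemma subgroup_mobius_rec_fuel n m (H K : {set gT}) :
  (#|K| < n)%N -> (#|K| < m)%N -> subgroup_mobius_rec n H K = subgroup_mobius_rec m H K.
Proof.
elim: n m K => [|n IHn] [|m] K //= ltKn ltKm; try by rewrite ltn0 in ltKn ltKm.
case: ifP => // _; case: ifP => // _; congr (- _).
apply: eq_bigr => L /andP[_ /proper_card ltLK].
by apply: IHn; [exact: leq_trans ltLK ltKn | exact: leq_trans ltLK ltKm].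
Qed.

Lemma subgroup_mobius1_rec (K : {group gT}) : K :!=: 1%g ->
  subgroup_mobius 1%g K =
    - \sum_(L : {group gT} | L \proper K) subgroup_mobius 1%g L.
Proof.
move=> ntK; rewrite /subgroup_mobius /= eq_sym (negbTE ntK) sub1G; congr (- _).
apply: eq_big => [L | L /andP[_ /proper_card ltLK]]; first by rewrite sub1G.
exact: subgroup_mobius_rec_fuel ltLK (ltnSn _).
Qed.

Lemma sum_subgroup_mobius1 (K : {group gT}) :
  \sum_(Z : {group gT} | Z \subset K) subgroup_mobius 1%g Z = (K :==: 1%g)%:R.
Proof.
rewrite (bigD1 K) //=; have [K1 | ntK] := eqVneq (K : {set gT}) 1%g.
  rewrite /subgroup_mobius /= {1}K1 eqxx big1 ?addr0 // => Z /andP[sZK neZK].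
  by case/eqP: neZK; apply/val_inj/eqP; rewrite /= eqEsubset sZK K1 sub1G.
rewrite subgroup_mobius1_rec // [X in _ + X](eq_bigl (fun L : {group gT} => L \proper K)).
  by rewrite addNr.
by move=> L; rewrite properEneq andbC.
Qed.

End SubgroupMobius.

Section LinearCharSum.
Variables (gT : finGroupType) (G : {group gT}) (xi : 'CF(G)).
Hypothesis lin_xi : xi \is a linear_char.

Lemma sum_lin_char_subgroup (Z : {group gT}) : Z \subset G ->
  \sum_(y in Z) xi y = #|Z|%:R *+ (Z \subset cfker xi).
Proof.
move=> sZG.
have [sZker | /subsetPn[y0 Zy0 notKy0]] := boolP (Z \subset cfker xi).
  rewrite -sumr_const; apply: eq_bigr => y /(subsetP sZker).
  by rewrite cfkerEchar ?lin_charW // inE => /andP[_ /eqP ->]; apply: lin_char1.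
have Gy0 := subsetP sZG y0 Zy0.
have xi_y0_neq1 : xi y0 != 1.
  apply: contra notKy0 => /eqP xi_y0; rewrite cfkerEchar ?lin_charW // inE Gy0.
  by rewrite xi_y0 (lin_char1 lin_xi) eqxx.
(* Translating by [y0] permutes [Z]; since [xi y0 != 1], the sum must vanish. *)
have sum_fixed : \sum_(y in Z) xi y = xi y0 * \sum_(y in Z) xi y.
  rewrite big_distrr (reindex_inj (mulgI y0)) /=.
  apply: eq_big => [y | y]; first by rewrite groupMl.
  by rewrite groupMl // => Zy; rewrite (lin_charM lin_xi) // (subsetP sZG).
have : (1 - xi y0) * \sum_(y in Z) xi y = 0 by rewrite mulrBl mul1r -sum_fixed subrr.
by move/eqP; rewrite mulf_eq0 subr_eq0 eq_sym (negbTE xi_y0_neq1) mulr0n => /eqP.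
Qed.

End LinearCharSum.

Section AbelianCharacters.
Variables (gT : finGroupType) (E : {group gT}).
Hypothesis abE : abelian E.

Lemma sum_irr_abelian x : \sum_(i : Iirr E) 'chi_i x = #|E|%:R *+ (x == 1%g).
Proof.
rewrite -cfRegE cfReg_sum sum_cfunE; apply: eq_bigr => i _.
by rewrite cfunE (lin_char1 (char_abelianP E abE i)) mul1r.
Qed.

Lemma sum_irr_cfker_sub (Z : {group gT}) z : Z \subset E -> z \in E ->
  #|Z|%:R * \sum_(i | Z \subset cfker 'chi[E]_i) 'chi_i z = #|E|%:R *+ (z \in Z).
Proof.
move=> sZE Ez; have lin_chi := char_abelianP E abE.
transitivity (\sum_(y in Z) \sum_(i : Iirr E) 'chi_i (z * y)%g).
  rewrite exchange_big big_mkcond big_distrr /=; apply: eq_bigr => i _.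
  under eq_bigr => y Zy do rewrite (lin_charM (lin_chi i) Ez (subsetP sZE y Zy)).
  rewrite -big_distrr /= (sum_lin_char_subgroup (lin_chi i) sZE).
  by case: ifP => _; rewrite ?mulr0 ?mulr0n // mulr1n mulrC.
under eq_bigr => y _ do rewrite sum_irr_abelian -(inj_eq (mulgI z^-1%g)) mulKg mulg1.
rewrite -(groupV Z); have [Zz' | notZz'] := boolP (z^-1 \in Z)%g.
  by rewrite (bigD1 z^-1)%g //= eqxx big1 ?addr0 // => y /andP[_ /negbTE ->].
by rewrite big1 // => y Zy; case: eqP Zy => // ->; rewrite (negbTE notZz').
Qed.

Lemma irr_cfker_neq1 (i : Iirr E) : ~~ cyclic E -> cfker 'chi[E]_i != 1%g.
Proof.
apply: contra => /eqP ker1; rewrite -(center_idP abE).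
by apply: (@irr_faithful_center _ _ i); rewrite /cfaithful ker1.
Qed.

Lemma sum_subgroup_mobius1_div_card z : ~~ cyclic E -> z \in E ->
  \sum_(Z : {group gT} | (Z \subset E) && (z \in Z))
     (subgroup_mobius 1%g Z)%:~R / #|Z|%:R = 0 :> algC.
Proof.
move=> ncycE Ez; have E_neq0 : #|E|%:R != 0 :> algC by rewrite pnatr_eq0 -lt0n.
transitivity (#|E|%:R^-1 * \sum_(Z : {group gT} | Z \subset E)
  \sum_(i | Z \subset cfker 'chi[E]_i) (subgroup_mobius 1%g Z)%:~R * 'chi_i z).
  rewrite big_mkcondr big_distrr /=; apply: eq_bigr => Z sZE.
  have Z_neq0 : #|Z|%:R != 0 :> algC by rewrite pnatr_eq0 -lt0n.
  rewrite -big_distrr /= -[\sum_(i | _) _](mulKf Z_neq0) (sum_irr_cfker_sub sZE Ez).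
  by case: ifP => _; rewrite ?mulr0n ?mulr0 // mulr1n; field; apply/andP.
rewrite (exchange_big_dep predT) //= big1 ?mulr0 // => i _.
rewrite -big_distrl /= (eq_bigl (fun Z : {group gT} => Z \subset cfker 'chi_i)).
  by rewrite -rmorph_sum sum_subgroup_mobius1 (negbTE (irr_cfker_neq1 i ncycE)) mul0r.
by move=> Z; rewrite andb_idl // => /subset_trans; apply; apply: cfker_sub.
Qed.

End AbelianCharacters.

Local Close Scope ring_scope.

Theorem lemma2p5 (p : nat) (gT : finGroupType) (E : {group gT}) :
  prime p -> (p.-abelem E)%g -> 2 <= 'r(E)%g ->
  forall z : gT, z \in E ->
  (\sum_(Z : {group gT} | (Z \subset E) && (z \in Z))
      ((subgroup_mobius 1%g (Z : {set gT}))%:~R / (#|Z|%:R) : rat) = 0)%R.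
Proof.
move=> _ abelE rankE z Ez.
have ncycE : ~~ cyclic E by rewrite (abelem_cyclic abelE) -(rank_abelem abelE) -ltnNge.
apply: (fmorph_inj (@ratr algC)); rewrite rmorph0 rmorph_sum /=.
under eq_bigr do rewrite fmorph_div /= ratr_int ratr_nat.
by rewrite (sum_subgroup_mobius1_div_card (abelem_abelian abelE) ncycE Ez).
Qed.
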